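(* Let $A=\{a_1,\ldots,a_k\}$ be a multiset of $k$ nonnegative integers (not necessarily distinct). If a tree $T$ has order at most $\sum_{i=1}^k a_i+\max\{a_i : 1\le i\le k\}-1$, then $T$ is $A$-burnable.
   Context: For a vertex $u$ of a graph and an integer $m$, $N_m[u]$ denotes the set of vertices at distance at most $m$ from $u$ (so $N_m[u]=\emptyset$ if $m<0$). For a multiset $A$ of integers $a_1,\ldots,a_k$, a graph $G$ is called $A$-burnable if there exist $k$ vertices $v_1,\ldots,v_k$ of $G$ (not necessarily distinct) such that $V(G)\subseteq\bigcup_{i=1}^k N_{a_i-1}[v_i]$. The order of a graph is its number of vertices. *)

From mathcomp Require Import all_boot all_order all_algebra.
Set Implicit Arguments. Unset Strict Implicit. Unset Printing Implicit Defensive.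
Import GRing.Theory Num.Theory.

Definition simple_graph (T : finType) (e : rel T) : Prop :=
  symmetric e /\ irreflexive e.

(* A cycle is a closed walk x, p_1, ..., p_n, x with n >= 2 and the vertices
   x, p_1, ..., p_n pairwise distinct (so of length >= 3). *)
Definition acyclic (T : finType) (e : rel T) : Prop :=
  forall (x : T) (p : seq T),
    path e x p -> uniq (x :: p) -> (2 <= size p)%N -> ~~ e (last x p) x.

Definition is_tree (T : finType) (e : rel T) : Prop :=
  [/\ simple_graph e, (0 < #|T|)%N, (forall x y : T, connect e x y) & acyclic e].

(* dist(u,v) <= m, i.e. v \in N_m[u]: there is a walk from u to v with at most
   m edges.  m is an integer, so N_m[u] is empty when m < 0. *)
Definition within (T : finType) (e : rel T) (u v : T) (m : int) : Prop :=
  exists p : seq T, [/\ path e u p, last u p = v & ((size p)%:Z <= m)%R].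

Definition ball (T : finType) (e : rel T) (m : int) (u : T) : T -> Prop :=
  fun v => within e u v m.

(* The multiset A = {a_1, ..., a_k} is represented by the sequence A (of
   length k).  G is A-burnable iff there are vertices v_1..v_k with
   V(G) included in the union of the N_{a_i - 1}[v_i]. *)
Definition burnable (T : finType) (e : rel T) (A : seq nat) : Prop :=
  exists v : 'I_(size A) -> T,
    forall x : T, exists i : 'I_(size A),
      ball e ((nth 0%N A i)%:Z - 1)%R (v i) x.

From mathcomp Require Import all_boot all_order all_algebra zify.
Set Implicit Arguments. Unset Strict Implicit. Unset Printing Implicit Defensive.

(* Fix a root r and a breadth-first spanning tree (parent map and depth).
   Burn with the radii in any order that keeps the largest one last, always
   keeping the unburnt set S closed under taking parents.  For a radius a,
   take a deepest vertex u of S and its (a-1)-th ancestor v: the ball of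
   radius a-1 about v contains every vertex of S in the subtree of v, among
   them the a vertices from u up to v, and S minus that subtree is again
   parent-closed.  Each non-final radius a thus removes at least a vertices.
   For the final radius M we have |S| <= 2M-1, and the same v covers all of
   S: a vertex y outside the subtree of v climbs j steps to the first
   strict ancestor z of v and then descends to v, so its distance to v is at
   most j + depth v; and the j vertices below z on the way up together with
   the depth v strict ancestors of v are distinct vertices of S outside the
   subtree of v, hence number at most |S| - M <= M - 1. *)

Lemma uniq_size_leq_card (T : finType) (s : seq T) (A : {set T}) :
  uniq s -> {subset s <= A} -> size s <= #|A|.
Proof. by move=> /card_uniqP <- /subsetP; apply: subset_leq_card. Qed.

Section Burning.
Variables (T : finType) (e : rel T) (r : T).
Hypothesis e_sym : symmetric e.
Hypothesis connected_to_root : forall x, connect e x r.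

Definition walk (a b : T) (n : nat) :=
  exists p, [/\ path e a p, last a p = b & size p = n].

Lemma walk_cat a b c n m : walk a b n -> walk b c m -> walk a c (n + m).
Proof.
case=> p [Hp Hl <-] [q [Hq Hl' <-]]; exists (p ++ q).
by rewrite cat_path last_cat Hl Hp Hq size_cat.
Qed.

Lemma walk_sym a b n : walk a b n -> walk b a n.
Proof.
case=> p [Hp <- <-]; exists (rev (belast a p)); split.
- by rewrite rev_path (eq_path (fun x y => e_sym y x)).
- by case: p {Hp} => //= x p; rewrite rev_cons last_rcons.
- by rewrite size_rev size_belast.
Qed.

Lemma walk_within a b n (m : int) : walk a b n -> (n%:Z <= m)%R -> within e a b m.
Proof. by case=> p [Hp Hl <-] Hm; exists p. Qed.

Definition walk_to_root_in (x : T) (n : nat) :=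
  [exists p : n.-tuple T, path e x p && (last x p == r)].

Lemma walk_to_root_inP x n : reflect (walk x r n) (walk_to_root_in x n).
Proof.
apply: (iffP existsP) => [[p /andP[Hp /eqP Hl]] | [p [Hp Hl <-]]].
  by exists p; rewrite size_tuple.
by exists (in_tuple p); rewrite /= Hp Hl eqxx.
Qed.

Lemma exists_walk_to_root x : exists n, walk_to_root_in x n.
Proof.
case/connectP: (connected_to_root x) => p Hp Hl.
by exists (size p); apply/walk_to_root_inP; exists p.
Qed.

Definition depth x := ex_minn (exists_walk_to_root x).

Lemma depth_walk x : walk x r (depth x).
Proof. by apply/walk_to_root_inP; rewrite /depth; case: ex_minnP. Qed.

Lemma depth_min x n : walk x r n -> depth x <= n.
Proof.
by move/walk_to_root_inP; rewrite /depth; case: ex_minnP => m _; apply.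
Qed.

Lemma depth_root : depth r = 0.
Proof. by apply/eqP; rewrite -leqn0; apply: depth_min; exists [::]. Qed.

Lemma depth_eq0 x : depth x = 0 -> x = r.
Proof. by move=> H; case: (depth_walk x) => p [_ <-]; rewrite H => /size0nil ->. Qed.

Lemma exists_parent x : x != r -> exists y, e x y && (depth y == (depth x).-1).
Proof.
move=> xr; case: (depth_walk x) => [[|y p] [/= Hp Hl Hs]].
  by rewrite -Hl eqxx in xr.
case/andP: Hp => xy Hp; exists y; rewrite xy /=.
have depth_y : depth y <= size p by apply: depth_min; exists p.
have depth_x : depth x <= (depth y).+1.
  case: (depth_walk y) => q [Hq Hlq Hsq].
  by rewrite -Hsq; apply: depth_min; exists (y :: q); rewrite /= xy Hq Hlq.
apply/eqP; lia.
Qed.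

Definition parent x :=
  if x == r then r else odflt r [pick y | e x y && (depth y == (depth x).-1)].

Lemma parent_spec x : x != r -> e x (parent x) && (depth (parent x) == (depth x).-1).
Proof.
move=> xr; rewrite /parent (negbTE xr); case: pickP => // none.
by case: (exists_parent xr) => y; rewrite none.
Qed.

Lemma depth_parent x : depth (parent x) = (depth x).-1.
Proof.
case: (eqVneq x r) => [->|xr]; first by rewrite /parent eqxx depth_root.
by case/andP: (parent_spec xr) => _ /eqP.
Qed.

Lemma edge_parent x : x != r -> e x (parent x).
Proof. by case/parent_spec/andP. Qed.

Lemma depth_iter_parent t x : depth (iter t parent x) = depth x - t.
Proof.
elim: t => [|t IH] /=; first by rewrite subn0.
by rewrite depth_parent IH subnS.
Qed.

Lemma iter_depth_parent x : iter (depth x) parent x = r.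
Proof. by apply: depth_eq0; rewrite depth_iter_parent subnn. Qed.

Lemma walk_to_ancestor j x : j <= depth x -> walk x (iter j parent x) j.
Proof.
elim: j x => [|j IH] x le_jx; first by exists [::].
rewrite iterSr.
have [p [Hp Hl Hs]] : walk (parent x) (iter j parent (parent x)) j.
  by apply: IH; rewrite depth_parent; lia.
have xr : x != r by apply: contraTneq le_jx => ->; rewrite depth_root.
by exists (parent x :: p); rewrite /= edge_parent // Hp Hs.
Qed.

Lemma walk_from_ancestor j x : j <= depth x -> walk (iter j parent x) x j.
Proof. by move/walk_to_ancestor/walk_sym. Qed.

Lemma uniq_ancestors x a n :
  a + n <= (depth x).+1 -> uniq [seq iter t parent x | t <- iota a n].
Proof.
move=> le_an; rewrite map_inj_in_uniq ?iota_uniq // => t1 t2.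
rewrite !mem_iota => /andP[_ lt1] /andP[_ lt2] /(congr1 depth).
rewrite !depth_iter_parent; lia.
Qed.

Definition parent_closed (S : {set T}) := forall x, x \in S -> parent x \in S.

Lemma parent_closed_iter S t x : parent_closed S -> x \in S -> iter t parent x \in S.
Proof. by move=> closedS xS; elim: t => //= t IH; apply: closedS. Qed.

Definition subtree v :=
  [set x | (depth v <= depth x) && (iter (depth x - depth v) parent x == v)].

Lemma subtree_root x : x \in subtree r.
Proof. by rewrite inE depth_root subn0 iter_depth_parent eqxx. Qed.

Lemma subtree_iter v t y : iter t parent y \in subtree v -> y \in subtree v.
Proof.
rewrite !inE depth_iter_parent => /andP[le_vy /eqP anc].
case: (leqP t (depth y)) => le_ty.
  apply/andP; split; first lia.
  have -> : depth y - depth v = (depth y - t - depth v) + t by lia.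
  by rewrite iterD anc.
have /depth_eq0 -> : depth v = 0 by lia.
by rewrite depth_root subn0 iter_depth_parent eqxx.
Qed.

Lemma parent_closedD_subtree S v :
  parent_closed S -> parent_closed (S :\: subtree v).
Proof.
move=> closedS x /setDP[xS xNv]; rewrite in_setD closedS // andbT.
by apply: contra xNv; apply: (@subtree_iter v 1).
Qed.

Lemma walk_from_subtree_root v x : x \in subtree v -> walk v x (depth x - depth v).
Proof.
rewrite inE => /andP[_ /eqP anc].
by have := walk_from_ancestor (leq_subr (depth v) (depth x)); rewrite anc.
Qed.

Lemma card_subtree_ancestor S u m : parent_closed S -> u \in S -> m <= depth u ->
  m < #|S :&: subtree (iter m parent u)|.
Proof.
move=> closedS uS le_mu.
rewrite -[m.+1](size_iota 0) -(size_map (fun t => iter t parent u)).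
apply: uniq_size_leq_card; first by apply: uniq_ancestors; lia.
move=> z /mapP[t]; rewrite mem_iota => /andP[_ le_tm] ->.
rewrite in_setI parent_closed_iter //= inE !depth_iter_parent.
apply/andP; split; first lia.
by rewrite -iterD; have -> : depth u - t - (depth u - m) + t = m by lia.
Qed.

Lemma exists_cut S m : parent_closed S -> r \in S ->
  exists2 v, v \in S &
    {in S :&: subtree v, forall x, exists2 n, n <= m & walk v x n} /\
    (S :\: subtree v = set0 \/ m.+1 + #|S :\: subtree v| <= #|S|).
Proof.
move=> closedS rS.
case: (@arg_maxnP T r [in S] depth rS) => u uS deepest.
set v := iter (minn m (depth u)) parent u.
have depth_v : depth v = depth u - minn m (depth u) by rewrite depth_iter_parent.
exists v; first exact: parent_closed_iter.
split.
  move=> x /setIP[xS xv]; exists (depth x - depth v); last exact: walk_from_subtree_root.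
  by have := deepest x xS; lia.
case: (leqP m (depth u)) => [le_mu | lt_um].
  right; rewrite -(cardsID (subtree v) S) leq_add2r.
  by rewrite /v (minn_idPl le_mu); apply: card_subtree_ancestor.
left; apply/setP => x.
by rewrite in_setD in_set0 /v (minn_idPr (ltnW lt_um)) iter_depth_parent subtree_root.
Qed.

Definition strict_ancestor v z :=
  (depth z < depth v) && (iter (depth v - depth z) parent v == z).

Lemma strict_ancestor_root v y : y \notin subtree v -> strict_ancestor v r.
Proof.
move=> yNv; rewrite /strict_ancestor depth_root subn0 iter_depth_parent eqxx andbT.
by rewrite lt0n; apply: contraNneq yNv => /depth_eq0 ->; apply: subtree_root.
Qed.

Lemma card_outside_subtree S v y j :
  parent_closed S -> v \in S -> y \in S :\: subtree v ->
  (forall t, strict_ancestor v (iter t parent y) -> j <= t) ->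
  j + depth v <= #|S :\: subtree v|.
Proof.
move=> closedS vS /setDP[yS yNv] jmin.
have -> : j + depth v = size ([seq iter t parent y | t <- iota 0 j] ++
                              [seq iter t parent v | t <- iota 1 (depth v)]).
  by rewrite size_cat !size_map !size_iota.
have jy : j <= depth y.
  by apply: jmin; rewrite iter_depth_parent; apply: strict_ancestor_root yNv.
apply: uniq_size_leq_card.
  rewrite cat_uniq !uniq_ancestors ?andbT /=; try lia.
  apply/hasPn => z /mapP[t2]; rewrite mem_iota => /andP[le1t2 le_t2v] -> {z}.
  apply/mapP => -[t1]; rewrite mem_iota => /andP[_ lt_t1j] anc.
  suff : j <= t1 by lia.
  apply: jmin; rewrite -anc /strict_ancestor depth_iter_parent.
  have -> : depth v - (depth v - t2) = t2 by lia.
  by rewrite eqxx andbT; apply/ltP; lia.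
move=> z; rewrite mem_cat => /orP[] /mapP[t]; rewrite mem_iota => /andP[ge_t lt_t] ->.
  rewrite in_setD (parent_closed_iter _ closedS yS) andbT.
  by apply: contra yNv; apply: subtree_iter.
rewrite in_setD (parent_closed_iter _ closedS vS) andbT inE depth_iter_parent.
by rewrite negb_and -ltnNge; apply/orP; left; lia.
Qed.

Lemma walk_from_outside_subtree S v y :
  parent_closed S -> v \in S -> y \in S :\: subtree v ->
  exists2 n, n <= #|S :\: subtree v| & walk v y n.
Proof.
move=> closedS vS yS.
have root_anc : strict_ancestor v (iter (depth y) parent y).
  by case/setDP: yS => _ yNv; rewrite iter_depth_parent; apply: strict_ancestor_root yNv.
have has_anc : exists t, strict_ancestor v (iter t parent y) by exists (depth y).
case: (ex_minnP has_anc) => j /andP[_ /eqP anc] jmin.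
have jy : j <= depth y by apply: jmin.
have := card_outside_subtree closedS vS yS jmin.
exists ((depth v - depth (iter j parent y)) + j); first lia.
apply: walk_cat (walk_from_ancestor jy).
by rewrite -[X in walk _ X _]anc; apply/walk_to_ancestor/leq_subr.
Qed.

Definition coverable (A : seq nat) (S : {set T}) := exists L : seq (nat * T),
  map fst L = A /\
  {in S, forall x, exists2 p, p \in L & within e p.2 x (p.1%:Z - 1)%R}.

Lemma coverable_set0 A : coverable A set0.
Proof.
exists [seq (a, r) | a <- A]; split; last by move=> x; rewrite in_set0.
by rewrite -map_comp map_id.
Qed.

Lemma coverable_cons a w A S R :
  coverable A (S :\: R) -> {in S :&: R, forall x, within e w x (a%:Z - 1)%R} ->
  coverable (a :: A) S.
Proof.
case=> L [<- covL] covR; exists ((a, w) :: L); split=> // x xS.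
case: (boolP (x \in R)) => xR.
  by exists (a, w); [apply: mem_head | apply: covR; apply/setIP].
have [p pL covp] : exists2 p, p \in L & within e p.2 x (p.1%:Z - 1)%R.
  by apply: covL; rewrite in_setD xR.
by exists p => //; rewrite inE pL orbT.
Qed.

Lemma coverable_swap a b A S : coverable (a :: b :: A) S -> coverable (b :: a :: A) S.
Proof.
case=> [[|p [|q L]]] [//= [pa qb LA] cov].
exists [:: q, p & L]; split; first by rewrite /= pa qb LA.
by move=> x /cov[s sL covs]; exists s => //; move: sL; rewrite !inE orbCA.
Qed.

Lemma coverable_peel a A S : parent_closed S -> r \in S ->
  (forall S', parent_closed S' -> #|S'| + a <= #|S| -> coverable A S') ->
  coverable (a :: A) S.
Proof.
move=> closedS rS IH; case: a IH => [|m] IH.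
  apply: (@coverable_cons 0 r A S set0) => [|x]; last by rewrite setI0 in_set0.
  by rewrite setD0; apply: IH; rewrite ?addn0.
have [v vS [cov_v cut]] := exists_cut m closedS rS.
apply: (coverable_cons (R := subtree v) (w := v)).
  case: cut => [-> | card_cut]; first exact: coverable_set0.
  by apply: IH; [apply: parent_closedD_subtree | rewrite addnC].
move=> x /cov_v[n le_nm walk_n]; apply: (walk_within walk_n); lia.
Qed.

Lemma coverable_single M S : parent_closed S -> r \in S -> #|S| + 1 <= M + M ->
  coverable [:: M] S.
Proof.
move=> closedS rS card_S.
have [v vS [cov_v cut]] := exists_cut M.-1 closedS rS.
have card_out : #|S :\: subtree v| <= M.-1.
  by case: cut => [-> | ]; rewrite ?cards0 //; lia.
exists [:: (M, v)]; split=> // x xS; exists (M, v); rewrite ?mem_head //=.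
case: (boolP (x \in subtree v)) => xv.
  have [n le_n walk_n] : exists2 n, n <= M.-1 & walk v x n by apply: cov_v; apply/setIP.
  by apply: (walk_within walk_n); lia.
have [n le_n walk_n] : exists2 n, n <= #|S :\: subtree v| & walk v x n.
  by apply: walk_from_outside_subtree; rewrite ?in_setD ?xv.
by apply: (walk_within walk_n); lia.
Qed.

Lemma coverable_parent_closed A S : parent_closed S ->
  #|S| + 1 <= \sum_(a <- A) a + \max_(a <- A) a -> coverable A S.
Proof.
have [n] := ubnP (size A); elim: n A S => // n IH [|a A] S /= sizeA closedS.
  by rewrite !big_nil addn1.
case: (set_0Vmem S) => [-> _ | [x xS]]; first exact: coverable_set0.
have rS : r \in S by rewrite -(iter_depth_parent x) parent_closed_iter.
case: A sizeA => [|b A] sizeA card_S.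
  apply: coverable_single => //.
  by move: card_S; rewrite !big_cons !big_nil maxn0; lia.
move: card_S; rewrite !big_cons; set s := \sum_(c <- A) c; set M := \max_(c <- A) c.
case: (leqP a (maxn b M)) => [le_a | lt_a] card_S.
  apply: coverable_peel => // S' closedS' card_S'.
  by apply: IH => //; rewrite !big_cons -/s -/M; lia.
apply/coverable_swap/coverable_peel => // S' closedS' card_S'.
by apply: IH => //=; rewrite !big_cons -/s -/M; lia.
Qed.

Lemma burnable_of_coverable A : coverable A [set: T] -> burnable e A.
Proof.
case=> L [LA cov]; have sizeL : size L = size A by rewrite -LA size_map.
exists (fun i => (nth (0, r) L i).2) => x.
have [p pL covp] := cov x (in_setT x).
have ltpA : index p L < size A by rewrite -sizeL index_mem.
by exists (Ordinal ltpA); rewrite /ball /= -LA (nth_map (0, r)) ?sizeL // nth_index.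
Qed.

End Burning.

Theorem lemma1 (T : finType) (e : rel T) (A : seq nat) :
  is_tree e ->
  (#|T| + 1 <= \sum_(a <- A) a + \max_(a <- A) a)%N ->
  burnable e A.
Proof.
case=> [[e_sym _] /card_gt0P[r _] connected _] card_T.
apply: (burnable_of_coverable r).
apply: (coverable_parent_closed e_sym (connected_to_root := connected^~ r)).
  by move=> x; rewrite inE.
by rewrite cardsT.
Qed.
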